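(* Fix a problem instance $x$. Suppose the domain $\mathcal{A}\times\mathcal{W}$ is partitioned into $N$ connected sets $R_{x,1},\dots,R_{x,N}$ and that for each $i\in[N]$ there is a constant $c_{x,i}$ with $f_x(\alpha,w)=c_{x,i}$ for all $(\alpha,w)\in R_{x,i}$. Then there are $O(N)$ points $\alpha_{\min}=\alpha_0<\alpha_1<\dots<\alpha_t=\alpha_{\max}$, $t=O(N)$, such that the dual utility function $u^*_x(\alpha)=\sup_{w\in\mathcal{W}}f_x(\alpha,w)$ is constant on each open interval $(\alpha_j,\alpha_{j+1})$. In particular $u^*_x$ has $O(N)$ discontinuity points and is piecewise constant with $O(N)$ pieces.
   Context: Setting: $\mathcal{X}$ is a set of problem instances, $\mathcal{A}=[\alpha_{\min},\alpha_{\max}]\subset\mathbb{R}$ is the hyperparameter domain, $\mathcal{W}=[w_{\min},w_{\max}]^d\subset\mathbb{R}^d$ is the parameter domain, and $f:\mathcal{X}\times\mathcal{A}\times\mathcal{W}\to[0,H]$. For fixed $x$, the parameter-dependent dual function is $f_x(\alpha,w):=f(x,\alpha,w)$ and the dual utility function is $u^*_x(\alpha):=\sup_{w\in\mathcal{W}}f_x(\alpha,w)$. *)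

From HB Require Import structures.
From mathcomp Require Import all_boot all_order all_algebra.
From mathcomp Require Import all_classical all_reals all_analysis.
Set Implicit Arguments. Unset Strict Implicit. Unset Printing Implicit Defensive.
Import Order.TTheory GRing.Theory Num.Theory.
Import numFieldNormedType.Exports.
Local Open Scope classical_set_scope.
Local Open Scope ring_scope.

Definition param_dom (R : realType) (d : nat) (wmin wmax : R) : set 'rV[R]_d :=
  [set w | forall i : 'I_d, wmin <= w ord0 i <= wmax].

Definition full_dom (R : realType) (d : nat) (amin amax wmin wmax : R)
  : set (R * 'rV[R]_d) :=
  [set p | amin <= p.1 <= amax /\ param_dom wmin wmax p.2].

Definition dual_utility (R : realType) (d : nat) (wmin wmax : R)
  (fx : R -> 'rV[R]_d -> R) (a : R) : R :=
  sup [set fx a w | w in param_dom wmin wmax].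

(* The alpha-projection of each connected region is an interval, so it can only
   start or stop containing alpha at its infimum or supremum.  Between two
   consecutive of these at most 2N endpoints every region therefore either covers
   the whole alpha-gap or misses it, so all the slices {f_x(alpha, w) | w in W}
   coincide on the gap, and so do their suprema. *)
From HB Require Import structures.
From mathcomp Require Import all_boot all_order all_algebra.
From mathcomp Require Import all_classical all_reals all_analysis.
From mathcomp Require Import zify.
Set Implicit Arguments.
Unset Strict Implicit.
Unset Printing Implicit Defensive.

Import Order.TTheory GRing.Theory Num.Theory.
Import numFieldNormedType.Exports.
Local Open Scope classical_set_scope.
Local Open Scope ring_scope.

Lemma is_interval_sup_le (R : realType) (E : set R) (a b : R) :
  is_interval E -> has_ubound E -> E a -> a < b -> ~ E b -> sup E <= b.
Proof.
move=> iE ubE Ea ab Nb; rewrite leNgt; apply/negP => bs.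
have supE : has_sup E by split; [exists a|].
have [e Ee] : exists2 e, E e & sup E - (sup E - b) < e.
  by apply: sup_adherent; rewrite ?subr_gt0.
rewrite subKr => be.
by apply: Nb; apply: (iE a e) => //; rewrite (ltW ab) (ltW be).
Qed.

Lemma is_interval_ge_inf (R : realType) (E : set R) (a b : R) :
  is_interval E -> has_lbound E -> E a -> b < a -> ~ E b -> b <= inf E.
Proof.
move=> iE lbE Ea ba Nb; rewrite leNgt; apply/negP => ib.
have infE : has_inf E by split; [exists a|].
have [e Ee] : exists2 e, E e & e < inf E + (b - inf E).
  by apply: inf_adherent; rewrite ?subr_gt0.
rewrite addrC subrK => eb.
by apply: Nb; apply: (iE e a) => //; rewrite (ltW eb) (ltW ba).
Qed.

Lemma is_interval_mem_gap (R : realType) (E : set R) (lo hi a b : R) :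
  is_interval E -> has_ubound E -> has_lbound E ->
  ~ (lo < inf E < hi) -> ~ (lo < sup E < hi) ->
  lo < a < hi -> lo < b < hi -> E a -> E b.
Proof.
move=> iE ubE lbE Ninf Nsup /andP[la ah] /andP[lb bh] Ea; apply: contrapT => Nb.
case: (ltgtP a b) => [ab|ba|eab]; last by rewrite eab in Ea.
- have aS : a <= sup E by apply: sup_upper_bound => //; split; [exists a|].
  have Sb := is_interval_sup_le iE ubE Ea ab Nb.
  by apply: Nsup; rewrite (lt_le_trans la aS) (le_lt_trans Sb bh).
- have Ia : inf E <= a by apply: ge_inf.
  have bI := is_interval_ge_inf iE lbE Ea ba Nb.
  by apply: Ninf; rewrite (lt_le_trans lb bI) (le_lt_trans Ia ah).
Qed.

Lemma connected_fst_is_interval (R : realType) (d : nat) (A : set (R * 'rV[R]_d)) :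
  connected A -> is_interval (fst @` A).
Proof.
move=> cA; apply/connected_intervalP.
apply: connected_continuous_connected => //.
by apply: continuous_subspaceT => p; exact: cvg_fst.
Qed.

Lemma sorted_lt_nth_gap d (T : porderType d) (x0 : T) (s : seq T) (j : nat) (p : T) :
  sorted <%O s -> (j.+1 < size s)%N -> p \in s -> ~ (nth x0 s j < p < nth x0 s j.+1)%O.
Proof.
move=> ss js ps; rewrite -(nth_index x0 ps).
have inS k : (k < size s)%N -> k \in [pred n | (n < size s)%N] by [].
rewrite !(lt_sorted_ltn_nth x0 ss) ?inS ?index_mem // ?(ltn_trans _ js) //.
by rewrite ltnS => /andP[jk kj]; have := leq_ltn_trans kj jk; rewrite ltnn.
Qed.

Lemma subdivision_avoiding d (T : orderType d) (lo hi : T) (s : seq T) :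
  (lo < hi)%O ->
  exists (t : nat) (alpha : nat -> T),
    [/\ (t <= (size s).+1)%N, alpha 0%N = lo, alpha t = hi,
        (forall j, (j <= t)%N -> lo <= alpha j <= hi)%O &
        (forall j, (j < t)%N -> (alpha j < alpha j.+1)%O /\
           forall p, p \in s -> ~ (alpha j < p < alpha j.+1)%O)].
Proof.
move=> lohi.
pose inner := sort <=%O (undup [seq p <- s | (lo < p < hi)%O]).
pose pts := lo :: rcons inner hi.
have mem_inner p : (p \in inner) = (p \in s) && (lo < p < hi)%O.
  by rewrite mem_sort mem_undup mem_filter andbC.
have pts_bounds p : p \in pts -> (lo <= p <= hi)%O.
  rewrite inE mem_rcons inE mem_inner.
  by case/or3P=> [/eqP->|/eqP->|/andP[_ /andP[lp ph]]]; rewrite ?lexx ?ltW.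
have sorted_pts : sorted <%O pts.
  have inner_gt_lo : all (fun p => lo < p)%O inner.
    by apply/allP => p; rewrite mem_inner => /andP[_ /andP[]].
  rewrite /pts /= rcons_path path_sortedE ?inner_gt_lo ?sort_lt_sorted ?undup_uniq //=.
    have := mem_last lo inner; rewrite inE mem_inner.
    by case/orP=> [/eqP->//|/andP[_ /andP[]]].
  exact: lt_trans.
exists (size inner).+1, (nth lo pts); split => //.
- by rewrite ltnS size_sort (leq_trans (size_undup _)) // size_filter count_size.
- by rewrite /= nth_rcons ltnn eqxx.
- by move=> j jt; apply/pts_bounds/mem_nth; rewrite /= size_rcons ltnS.
move=> j jt; split.
  by apply: (sorted_ltn_nth lt_trans) => //; rewrite inE /= size_rcons ltnS // ltnW.
move=> p ps gap; apply: (sorted_lt_nth_gap sorted_pts _ _ gap).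
  by rewrite /= size_rcons !ltnS.
have /andP[lo_j _] : (lo <= nth lo pts j <= hi)%O.
  by apply/pts_bounds/mem_nth; rewrite /= size_rcons ltnS ltnW.
have /andP[_ j_hi] : (lo <= nth lo pts j.+1 <= hi)%O.
  by apply/pts_bounds/mem_nth; rewrite /= size_rcons !ltnS.
case/andP: gap => jp pj.
by rewrite inE mem_rcons inE mem_inner ps (le_lt_trans lo_j jp) (lt_le_trans pj j_hi) !orbT.
Qed.

Section Regions.
Variables (R : realType) (d N : nat) (amin amax wmin wmax : R).
Variable Rg : 'I_N -> set (R * 'rV[R]_d).
Hypothesis Rg_sub : forall i, Rg i `<=` full_dom amin amax wmin wmax.
Hypothesis Rg_cover : forall p, full_dom amin amax wmin wmax p -> exists i, Rg i p.
Hypothesis Rg_connected : forall i, connected (Rg i).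

Definition region_endpoints : seq R :=
  [seq inf (fst @` Rg i) | i <- enum 'I_N] ++ [seq sup (fst @` Rg i) | i <- enum 'I_N].

Lemma size_region_endpoints : size region_endpoints = (N + N)%N.
Proof. by rewrite size_cat !size_map -enumT size_enum_ord. Qed.

Lemma regions_gt0 : amin <= amax -> wmin <= wmax -> (0 < N)%N.
Proof.
move=> le_a le_w; have [i _] : exists i, Rg i (amin, const_mx wmin).
  by apply: Rg_cover; split=> [|k]; rewrite /= ?mxE lexx.
exact: leq_ltn_trans (leq0n i) (ltn_ord i).
Qed.

Lemma region_proj_gap i (lo hi a b : R) :
  {in region_endpoints, forall p, ~ (lo < p < hi)} ->
  lo < a < hi -> lo < b < hi -> (fst @` Rg i) a -> (fst @` Rg i) b.
Proof.
move=> gap; have i_enum : i \in enum 'I_N by rewrite mem_enum.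
apply: is_interval_mem_gap.
- exact: connected_fst_is_interval.
- by exists amax => _ [p /Rg_sub [/andP[_ +] _] <-].
- by exists amin => _ [p /Rg_sub [/andP[+ _] _] <-].
- by apply: gap; rewrite mem_cat (map_f _ i_enum).
- by apply: gap; rewrite mem_cat (map_f _ i_enum) orbT.
Qed.

Variables (g : R -> 'rV[R]_d -> R) (c : 'I_N -> R).
Hypothesis g_const : forall i p, Rg i p -> g p.1 p.2 = c i.

Lemma slice_sub_on_gap (lo hi a b : R) :
  amin <= lo -> hi <= amax -> {in region_endpoints, forall p, ~ (lo < p < hi)} ->
  lo < a < hi -> lo < b < hi ->
  [set g a w | w in param_dom wmin wmax] `<=` [set g b w | w in param_dom wmin wmax].
Proof.
move=> le_lo le_hi gap ha hb _ [w Ww <-].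
have a_dom : amin <= a <= amax.
  by case/andP: ha => la ah; rewrite (le_trans le_lo (ltW la)) (le_trans (ltW ah)).
have [i Rgi] := Rg_cover (p := (a, w)) (conj a_dom Ww).
have [q Rgq qb] := region_proj_gap gap ha hb (ex_intro2 _ _ (a, w) Rgi erefl).
exists q.2; first by have [] := Rg_sub Rgq.
by rewrite -qb (g_const Rgq) -(g_const Rgi).
Qed.

Lemma dual_utility_const_on_gap (lo hi : R) :
  lo < hi -> amin <= lo -> hi <= amax ->
  {in region_endpoints, forall p, ~ (lo < p < hi)} ->
  exists u, forall a, lo < a < hi -> dual_utility wmin wmax g a = u.
Proof.
move=> lohi le_lo le_hi gap; set m := (lo + hi) / 2.
have hm : lo < m < hi by rewrite !midf_lt.
exists (dual_utility wmin wmax g m) => a ha; rewrite /dual_utility; congr sup.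
by apply/seteqP; split; apply: (slice_sub_on_gap le_lo le_hi gap).
Qed.

End Regions.

Theorem mainTheorem4 :
  exists C : nat,
  forall (R : realType) (X : Type) (d : nat) (amin amax wmin wmax H : R)
    (f : X -> R -> 'rV[R]_d -> R) (x : X) (N : nat)
    (Rg : 'I_N -> set (R * 'rV[R]_d)) (c : 'I_N -> R),
    amin < amax -> wmin <= wmax ->
    (forall x' a w, amin <= a <= amax -> param_dom wmin wmax w ->
        0 <= f x' a w <= H) ->
    (forall i, Rg i `<=` full_dom amin amax wmin wmax) ->
    (forall p, full_dom amin amax wmin wmax p -> exists i, Rg i p) ->
    (forall i j, i != j -> Rg i `&` Rg j = set0) ->
    (forall i, connected (Rg i)) ->
    (forall i p, Rg i p -> f x p.1 p.2 = c i) ->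
    exists (t : nat) (alpha : nat -> R),
      (t <= C * N)%N /\
      alpha 0%N = amin /\ alpha t = amax /\
      (forall j, (j < t)%N -> alpha j < alpha j.+1) /\
      (forall j, (j < t)%N -> exists u : R, forall a, alpha j < a < alpha j.+1 ->
          dual_utility wmin wmax (f x) a = u).
Proof.
exists 3%N => R X d amin amax wmin wmax H f x N Rg c lt_a le_w _ sub cover _ conn fc.
have N_gt0 := regions_gt0 cover (ltW lt_a) le_w.
have [t [alpha [t_le alpha0 alphat bounds steps]]] :=
  subdivision_avoiding (region_endpoints Rg) lt_a.
exists t, alpha; split.
  by rewrite size_region_endpoints in t_le; lia.
do 3 (split => //); first by move=> j /steps[].
move=> j jt; have [lt_j gap] := steps j jt.
have /andP[lo_j _] := bounds j (ltnW jt).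
have /andP[_ j_hi] := bounds j.+1 jt.
exact: (dual_utility_const_on_gap sub cover conn fc lt_j).
Qed.
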